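(* Let $G=(\Sigma,S,s_0,\delta)$ be a commutative grammar. If $D$ is a simple cycle or a skeleton run of $G$, then $\|\mathrm{out}(D)\|=O\!\left(2^{|S|^{O(1)}}\right)$, where the implicit constants are absolute (independent of $G$ and $D$).
   Context: For $v\in\mathbb{N}^X$, $|v|=\sum_x v(x)$ and $\|v\|=\max_x v(x)$. A commutative grammar is $G=(\Sigma,S,s_0,\delta)$ with finite alphabet $\Sigma$, finite state set $S$, $s_0\in S$, and a finite set $\delta\subseteq S\times\mathbb{N}^\Sigma\times\mathbb{N}^S$ of transitions $\tau=(s,a,t)$ ($\mathrm{source}(\tau)=s$, $\mathrm{out}(\tau)=a$, $\mathrm{target}(\tau)=t$); every state is the source of some transition, and every transition has $|a|\le1$, $|t|\le2$. For $D\in\mathbb{N}^\delta$ let $\mathrm{source}(D)(s)=\sum_{\mathrm{source}(\tau)=s}D(\tau)$, $\mathrm{out}(D)=\sum_\tau D(\tau)\mathrm{out}(\tau)$, $\mathrm{target}(D)=\sum_\tau D(\tau)\mathrm{target}(\tau)$, $\mathrm{supp}(D)=\{s:\mathrm{source}(D)(s)>0\}$. $D$ is connected from $s$ if every $t\in\mathrm{supp}(D)$ equals $s$ or is reachable by transitions $\tau_1,\ldots,\tau_m$ with $D(\tau_i)>0$, $\mathrm{source}(\tau_1)=s$, $\mathrm{source}(\tau_{i+1})\in\mathrm{target}(\tau_i)$, $t\in\mathrm{target}(\tau_m)$. $D$ is a cycle from $s$ if it is connected from $s$ and $\mathrm{source}(D)=\mathrm{target}(D)$; a cycle is a cycle from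 some state. $D$ is a run if it is connected from $s_0$ and $\mathrm{source}(D)=\mathrm{target}(D)+\{s_0\}$. A simple cycle is a nonzero cycle that cannot be written as a sum of smaller nonzero cycles. A skeleton run is a run $D$ which cannot be written as $D=D_1+C$ with $D_1$ a run, $C$ a nonzero cycle, and $\mathrm{supp}(D_1)=\mathrm{supp}(D)$. *)

From mathcomp Require Import all_boot.
Set Implicit Arguments. Unset Strict Implicit. Unset Printing Implicit Defensive.

(* The finite set delta of
   transitions is represented by a finite index type [trans] together with the
   three projections; [trans_inj] makes delta a genuine set of triples. *)
Record grammar := Grammar {
  alph : finType;
  st : finType;
  s0 : st;
  trans : finType;
  src : trans -> st;
  outp : trans -> {ffun alph -> nat};
  tgt : trans -> {ffun st -> nat};
  trans_inj : injective (fun t => (src t, outp t, tgt t));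
  every_state_source : forall s : st, exists t : trans, src t = s;
  outp_small : forall t : trans, \sum_(x : alph) outp t x <= 1;
  tgt_small : forall t : trans, \sum_(x : st) tgt t x <= 2
}.

Section Defs.
Variable G : grammar.

Definition normv (X : finType) (v : {ffun X -> nat}) : nat := \max_(x : X) v x.

Definition addv (X : finType) (u v : {ffun X -> nat}) : {ffun X -> nat} :=
  [ffun x => u x + v x].

Definition sourceD (D : {ffun trans G -> nat}) : {ffun st G -> nat} :=
  [ffun s => \sum_(t : trans G | src t == s) D t].
Definition outD (D : {ffun trans G -> nat}) : {ffun alph G -> nat} :=
  [ffun a => \sum_(t : trans G) D t * outp t a].
Definition targetD (D : {ffun trans G -> nat}) : {ffun st G -> nat} :=
  [ffun s => \sum_(t : trans G) D t * tgt t s].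
Definition suppD (D : {ffun trans G -> nat}) : {set st G} :=
  [set s | 0 < sourceD D s].

Definition connected_from (D : {ffun trans G -> nat}) (s : st G) : Prop :=
  forall u, u \in suppD D ->
    u = s \/
    exists (t1 : trans G) (p : seq (trans G)),
      [/\ all (fun t => 0 < D t) (t1 :: p),
          src t1 = s,
          path (fun a b => 0 < tgt a (src b)) t1 p &
          0 < tgt (last t1 p) u].

Definition cycle_from (D : {ffun trans G -> nat}) (s : st G) : Prop :=
  connected_from D s /\ sourceD D = targetD D.

Definition is_cycle (D : {ffun trans G -> nat}) : Prop :=
  exists s, cycle_from D s.

Definition is_run (D : {ffun trans G -> nat}) : Prop :=
  connected_from D (s0 G) /\
  sourceD D = [ffun s => targetD D s + (s == s0 G)].

Definition zeroD : {ffun trans G -> nat} := [ffun => 0].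

Definition sumD (l : seq {ffun trans G -> nat}) : {ffun trans G -> nat} :=
  foldr (@addv _) zeroD l.

Definition simple_cycle (D : {ffun trans G -> nat}) : Prop :=
  [/\ is_cycle D, D != zeroD &
      ~ exists l : seq {ffun trans G -> nat},
          [/\ 2 <= size l,
              forall C, C \in l -> is_cycle C /\ C != zeroD &
              sumD l = D]].

Definition skeleton_run (D : {ffun trans G -> nat}) : Prop :=
  is_run D /\
  ~ exists D1 C : {ffun trans G -> nat},
      [/\ is_run D1, is_cycle C, C != zeroD, suppD D1 = suppD D &
          D = addv D1 C].

End Defs.

From mathcomp Require Import all_boot zify.
From Stdlib Require Import Classical.
Set Implicit Arguments. Unset Strict Implicit. Unset Printing Implicit Defensive.

(* Flows D ∈ ℕ^δ are bounded in size |D|, which dominates ||out D||.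
   If V consumes P s more than it produces at every state s and contains no
   nonzero balanced subflow, some used state q is never produced; the
   transitions leaving q fire P q times and produce at most 2 P q, so deleting
   them removes q from the support and at most triples the deficit, whence
   |V| <= 4^|S| * sum P.
   A minimal nonzero balanced flow C (e.g. a simple cycle) contains a loop E
   with |E| <= |S|, found by following, from each used state, a transition
   producing it; C - E has no nonzero balanced subflow and deficit at most
   2|S|, so |C| <= |S| + 4^|S| * 2|S|.
   A skeleton run decomposes as R + C_1 + ... + C_k with R as in the first
   bound (deficit 1 at s0) and the C_i minimal balanced. Each C_i owns a
   transition of a spanning tree of D that no other part uses, since otherwise
   D - C_i would be a run with the same support; hence k <= |S|. *)

Lemma sum_ltn_exists (I : finType) (P : pred I) (a b : I -> nat) :
  \sum_(i | P i) a i < \sum_(i | P i) b i -> exists2 i, P i & a i < b i.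
Proof.
move=> lt_ab; apply: NNPP => no_i; move: lt_ab; rewrite ltnNge => /negP; apply.
by apply: leq_sum => i Pi; rewrite leqNgt; apply/negP => lt_i; apply: no_i; exists i.
Qed.

Lemma leq_card_private (I : finType) k (C : 'I_k -> I -> nat) (T : {pred I}) :
  (forall i, exists2 x, x \in T & forall j, (0 < C j x) = (j == i)) -> k <= #|T|.
Proof.
move=> private; have [f fT fP] := fin_all_exists2 private.
have f_inj : injective f by move=> i j fij; apply/eqP; rewrite -(fP j) -fij (fP i).
rewrite -[k]card_ord -(card_imset _ f_inj); apply: subset_leq_card.
by apply/subsetP => _ /imsetP [i _ ->].
Qed.

Lemma iter_periodic_point (T : finType) (f : T -> T) y :
  exists i k, iter k.+1 f (iter i f y) = iter i f y.
Proof.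
have /trajectP [i lt_i_o o_i] := looping_order f y.
exists i, (order f y - i).-1.
by rewrite prednK ?subn_gt0 // -iterD subnK ?o_i // ltnW.
Qed.

Lemma orbit_backward_ind (T : finType) (f : T -> T) x (P : T -> Prop) :
  iter (order f x) f x = x -> P x ->
  (forall q, q \in orbit f x -> P (f q) -> P q) ->
  forall u, u \in orbit f x -> P u.
Proof.
move=> x_periodic Px P_back.
have Pn d : d <= order f x -> P (iter (order f x - d) f x).
  elim: d => [|d IHd] d_le; first by rewrite subn0 x_periodic.
  apply: P_back; first by rewrite -fconnect_orbit fconnect_iter.
  by rewrite -iterS -subSn // subSS; apply: IHd; apply: ltnW.
move=> u; rewrite -fconnect_orbit => x_u.
rewrite -(iter_findex x_u) -[findex f x u](subKn (ltnW (findex_max x_u))).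
by apply: Pn; apply: leq_subr.
Qed.

Section Flows.
Variable G : grammar.
Local Notation flow := {ffun trans G -> nat}.
Local Notation zero := (zeroD G).
Implicit Types (A B C D E F V W : flow) (s u : st G).

Definition leD (A B : flow) := forall t, A t <= B t.
Definition sizeD (A : flow) := \sum_t A t.
Definition subD (A B : flow) : flow := [ffun t => A t - B t].
Definition unitD (x : trans G) : flow := [ffun t => (t == x) : nat].
Definition indD (T : {set trans G}) : flow := [ffun t => (t \in T) : nat].
Definition balanced (A : flow) := forall s, sourceD A s = targetD A s.

Lemma sourceD_add A B s : sourceD (addv A B) s = sourceD A s + sourceD B s.
Proof. by rewrite !ffunE -big_split; apply: eq_bigr => t _; rewrite ffunE. Qed.

Lemma targetD_add A B s : targetD (addv A B) s = targetD A s + targetD B s.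
Proof. by rewrite !ffunE -big_split; apply: eq_bigr => t _; rewrite ffunE mulnDl. Qed.

Lemma sizeD_add A B : sizeD (addv A B) = sizeD A + sizeD B.
Proof. by rewrite /sizeD -big_split; apply: eq_bigr => t _; rewrite ffunE. Qed.

Lemma sourceD_unit x s : sourceD (unitD x) s = (src x == s).
Proof.
rewrite ffunE big_mkcond (bigD1 x) //= ffunE eqxx big1 ?addn0; first by case: eqP.
by move=> t /negbTE; rewrite ffunE => ->; case: ifP.
Qed.

Lemma sizeD_unit x : sizeD (unitD x) = 1.
Proof.
rewrite /sizeD (bigD1 x) //= ffunE eqxx big1 // => t /negbTE.
by rewrite ffunE => ->.
Qed.

Lemma sizeD_ind (T : {set trans G}) : sizeD (indD T) = #|T|.
Proof. by rewrite /sizeD -sum1_card [RHS]big_mkcond; apply: eq_bigr => t _; rewrite ffunE. Qed.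

Lemma sizeD0 : sizeD zero = 0.
Proof. by rewrite /sizeD big1 // => t _; rewrite ffunE. Qed.

Lemma addD0 A : addv A zero = A.
Proof. by apply/ffunP => t; rewrite !ffunE addn0. Qed.

Lemma sumD_cat (l1 l2 : seq flow) : sumD (l1 ++ l2) = addv (sumD l1) (sumD l2).
Proof.
elim: l1 => [|A l1 IHl1] /=; first by apply/ffunP => t; rewrite !ffunE.
by rewrite /sumD /= -/(sumD _) IHl1; apply/ffunP => t; rewrite !ffunE addnA.
Qed.

Lemma sumD_nth (l : seq flow) t : sumD l t = \sum_(i < size l) nth zero l i t.
Proof.
elim: l => [|A l IHl]; first by rewrite /sumD /= ffunE big_ord0.
by rewrite /sumD /= -/(sumD _) ffunE big_ord_recl /= IHl.
Qed.

Lemma sizeD_sumD (l : seq flow) : sizeD (sumD l) = \sum_(A <- l) sizeD A.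
Proof.
elim: l => [|A l IHl]; first by rewrite big_nil; apply: sizeD0.
by rewrite big_cons -IHl /sumD /= sizeD_add.
Qed.

Lemma leD_trans B A C : leD A B -> leD B C -> leD A C.
Proof. by move=> AB BC t; apply: leq_trans (AB t) (BC t). Qed.

Lemma leD_addl A B : leD A (addv A B).
Proof. by move=> t; rewrite ffunE leq_addr. Qed.

Lemma leD_sub A B : leD (subD A B) A.
Proof. by move=> t; rewrite ffunE leq_subr. Qed.

Lemma subDK A B : leD B A -> A = addv B (subD A B).
Proof. by move=> BA; apply/ffunP => t; rewrite !ffunE subnKC. Qed.

Lemma leD_ind (T : {set trans G}) V : (forall t, t \in T -> 0 < V t) -> leD (indD T) V.
Proof. by move=> TV t; rewrite ffunE; case: (boolP (t \in T)) => // /TV. Qed.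

Lemma sourceD_le A B s : leD A B -> sourceD A s <= sourceD B s.
Proof. by move=> AB; rewrite !ffunE; apply: leq_sum. Qed.

Lemma targetD_le A B s : leD A B -> targetD A s <= targetD B s.
Proof. by move=> AB; rewrite !ffunE; apply: leq_sum => t _; rewrite leq_mul2r AB orbT. Qed.

Lemma sizeD_le A B : leD A B -> sizeD A <= sizeD B.
Proof. by move=> AB; apply: leq_sum. Qed.

Lemma sizeD_eq0 A : sizeD A = 0 -> A = zero.
Proof.
move/eqP; rewrite /sizeD sum_nat_eq0 => /forallP A0.
by apply/ffunP => t; rewrite ffunE; apply/eqP; apply: A0.
Qed.

Lemma flow_neq0_witness A : A != zero -> exists t, 0 < A t.
Proof.
move=> A_neq0; apply: NNPP => A_le0; move/eqP: A_neq0; apply; apply/ffunP => t.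
by rewrite ffunE; apply/eqP; rewrite -leqn0 leqNgt; apply/negP => At; apply: A_le0; exists t.
Qed.

Lemma sizeD_gt0 A : A != zero -> 0 < sizeD A.
Proof. by case/flow_neq0_witness => t At; rewrite /sizeD (bigD1 t) //= ltn_addr. Qed.

Lemma leD_neq0 A B : leD A B -> A != zero -> B != zero.
Proof.
move=> AB /flow_neq0_witness [t At]; apply/eqP => B0.
by have := leq_trans At (AB t); rewrite B0 ffunE.
Qed.

Lemma leD_sizeD_eq A B : leD A B -> sizeD B <= sizeD A -> A = B.
Proof.
move=> AB; rewrite [in sizeD B](subDK AB) sizeD_add -{2}[sizeD A]addn0 leq_add2l leqn0.
by move/eqP/sizeD_eq0 => BA0; rewrite [RHS](subDK AB) BA0 addD0.
Qed.

Lemma sourceD_gt0 A t : 0 < A t -> 0 < sourceD A (src t).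
Proof. by move=> At; rewrite ffunE (bigD1 t) //= ltn_addr. Qed.

Lemma sourceD_gt0_witness A u : 0 < sourceD A u -> exists2 t, src t = u & 0 < A t.
Proof.
rewrite ffunE lt0n sum_nat_eq0 => /forallPn [t].
by rewrite negb_imply -lt0n => /andP [/eqP <- At]; exists t.
Qed.

Lemma targetD_gt0 A t u : 0 < A t -> 0 < tgt t u -> 0 < targetD A u.
Proof. by move=> At tu; rewrite ffunE (bigD1 t) //= ltn_addr // muln_gt0 At. Qed.

Lemma targetD_gt0_witness A u : 0 < targetD A u -> exists2 t, 0 < A t & 0 < tgt t u.
Proof.
rewrite ffunE lt0n sum_nat_eq0 => /forallPn [t].
by rewrite /= muln_eq0 negb_or -!lt0n => /andP [At tu]; exists t.
Qed.

Lemma sum_targetD A : \sum_s targetD A s <= 2 * sizeD A.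
Proof.
under eq_bigr do rewrite ffunE.
rewrite exchange_big /sizeD big_distrr; apply: leq_sum => t _.
by rewrite -big_distrr /= mulnC leq_mul2r tgt_small orbT.
Qed.

Lemma balanced_sub A B : balanced A -> balanced B -> leD B A -> balanced (subD A B).
Proof.
move=> balA balB BA s; have := balA s.
by rewrite {1 2}(subDK BA) sourceD_add targetD_add balB => /addnI.
Qed.

(* Mirrors [connected_from]: [connected_from E r] unfolds to
   [forall u, u \in suppD E -> reachable E r u]. *)
Definition reachable E r u : Prop :=
  u = r \/
  exists (t1 : trans G) (p : seq (trans G)),
    [/\ all (fun t => 0 < E t) (t1 :: p), src t1 = r,
        path (fun a b => 0 < tgt a (src b)) t1 p & 0 < tgt (last t1 p) u].

Lemma reachable_le E F r u :
  (forall t, 0 < E t -> 0 < F t) -> reachable E r u -> reachable F r u.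
Proof.
move=> EF [->|[t1 [p [Ep t1r tp tu]]]]; [by left | right; exists t1, p; split=> //].
by apply/allP => t /(allP Ep) /EF.
Qed.

Lemma reachable_step E r v x w :
  reachable E r v -> 0 < E x -> src x = v -> 0 < tgt x w -> reachable E r w.
Proof.
move=> [->|[t1 [p [Ep t1r tp tv]]]] Ex xv xw; right.
  by exists x, [::]; split=> //=; rewrite Ex.
exists t1, (rcons p x); split=> //; first by rewrite -rcons_cons all_rcons Ex.
  by rewrite rcons_path tp /= xv.
by rewrite last_rcons.
Qed.

Lemma reachable_closed E (K : {set st G}) r u :
  r \in K -> (forall x w, 0 < E x -> src x \in K -> 0 < tgt x w -> w \in K) ->
  reachable E r u -> u \in K.
Proof.
move=> rK K_closed [->|[t1 [p [Ep t1r tp tu]]]] //.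
have : src t1 \in K by rewrite t1r.
elim: p t1 Ep tp tu {t1r} => [|t2 p IHp] t1 /= Ep tp tu t1K.
  by apply: (K_closed t1) => //; move: Ep; rewrite andbT.
move: Ep tp => /andP [Et1 Ep] /andP [t12 tp].
by apply: (IHp t2) => //; apply: (K_closed t1).
Qed.

Lemma reachable_targetD E r u :
  connected_from E r -> 0 < targetD E u -> reachable E r u.
Proof.
move=> E_conn /targetD_gt0_witness [t Et tu].
have supp_t : src t \in suppD E by rewrite inE; apply: sourceD_gt0.
exact: reachable_step (E_conn _ supp_t) Et (erefl _) tu.
Qed.

Lemma reachable_sourceD V r u :
  (forall s, targetD V s + (s == r) <= sourceD V s) ->
  reachable V r u -> 0 < sourceD V u.
Proof.
move=> V_src [->|[t1 [p [Vp _ _ tu]]]]; first by apply: leq_trans (V_src r); rewrite eqxx addn1.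
apply: leq_trans (leq_trans (leq_addr _ _) (V_src u)).
by apply: (targetD_gt0 _ tu); apply: (allP Vp); apply: mem_last.
Qed.

Lemma sourceD_ind (T : {set trans G}) s :
  sourceD (indD T) s = #|[set t in T | src t == s]|.
Proof.
rewrite ffunE -sum1_card big_mkcond [RHS]big_mkcond; apply: eq_bigr => t _.
by rewrite ffunE inE andbC; case: (src t == s); case: (t \in T).
Qed.

Lemma produced_loop V :
  V != zero -> (forall q, 0 < sourceD V q -> 0 < targetD V q) ->
  exists E r, [/\ leD E V, E != zero, forall s, sourceD E s <= targetD E s,
                  sizeD E <= #|st G| & connected_from E r].
Proof.
move=> /flow_neq0_witness [t0 Vt0] V_produced.
(* [tau q] produces [q]; along a periodic orbit of [f] the transitions [tau q]
   consume each orbit state once and produce it at least once. *)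
pose tau q := odflt t0 [pick t | (0 < V t) && (0 < tgt t q)].
pose f q := src (tau q).
have tauP q : 0 < sourceD V q -> 0 < V (tau q) /\ 0 < tgt (tau q) q.
  move=> /V_produced /targetD_gt0_witness [t Vt tq]; rewrite /tau.
  by case: pickP => [t' /andP [] | /(_ t)] //=; rewrite Vt tq.
have [i [k periodic]] := iter_periodic_point f (src t0).
set x := iter i f (src t0) in periodic.
have f_inj : {in orbit f x &, injective f} by apply/(orbitPcycle 3 5); exists k.
have f_orbit : iter (order f x) f x = x by apply/(orbitPcycle 3 4); exists k.
have orbit_supp q : q \in orbit f x -> 0 < sourceD V q.
  rewrite -fconnect_orbit => /iter_findex <-; rewrite /x -iterD.
  by elim: (_ + i) => [|j IHj] /=; [apply: sourceD_gt0 | apply: sourceD_gt0 (tauP _ IHj).1].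
pose TO := [set tau q | q in orbit f x].
have TO_tau t : t \in TO -> exists2 q, q \in orbit f x & t = tau q.
  by case/imsetP => q qO ->; exists q.
have E_pos t : t \in TO -> 0 < indD TO t by move=> tTO; rewrite ffunE tTO.
have src_TO s : 0 < sourceD (indD TO) s -> s \in orbit f x.
  by case/sourceD_gt0_witness => t <-; rewrite ffunE lt0b => /TO_tau [q qO ->]; apply: mem_orbit.
exists (indD TO), x; split.
- by apply: leD_ind => t /TO_tau [q qO ->]; apply: (tauP _ (orbit_supp _ qO)).1.
- by apply/negP => /eqP /ffunP /(_ (tau x)); rewrite !ffunE /TO (imset_f tau (in_orbit f x)).
- move=> s; case: (posnP (sourceD (indD TO) s)) => [-> // | /src_TO sO].
  apply: (@leq_trans 1); last first.
    exact: targetD_gt0 (E_pos _ (imset_f _ sO)) (tauP _ (orbit_supp _ sO)).2.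
  rewrite sourceD_ind; apply/card_le1_eqP => t1 t2.
  rewrite !inE => /andP [/TO_tau [q1 q1O ->] /eqP f1] /andP [/TO_tau [q2 q2O ->] /eqP f2].
  by congr tau; apply: f_inj => //; rewrite /f f1 f2.
- by rewrite sizeD_ind; apply: leq_trans (leq_imset_card _ _) (max_card _).
- move=> u; rewrite inE => /src_TO; apply: (orbit_backward_ind (P := reachable _ x) f_orbit).
    by left.
  move=> q qO x_fq; apply: reachable_step x_fq (E_pos _ (imset_f _ qO)) (erefl _) _.
  exact: (tauP _ (orbit_supp _ qO)).2.
Qed.

Lemma balanced_extension V r E :
  (forall s, targetD V s <= sourceD V s) -> leD E V ->
  (forall s, sourceD E s <= targetD E s) -> connected_from E r ->
  exists F, [/\ leD E F, leD F V, balanced F & connected_from F r].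
Proof.
move=> V_cons; move: {2}(sizeD V - sizeD E).+1 (ltnSn (sizeD V - sizeD E)) => n.
elim: n E => [//|n IHn] E size_lt EV E_prod E_conn.
have [E_bal | /not_all_ex_not [u Eu]] := classic (balanced E).
  by exists E; split=> // t.
have lt_u : sourceD E u < targetD E u by rewrite ltn_neqAle E_prod andbT; apply/eqP.
have : sourceD E u < sourceD V u.
  by apply: leq_trans lt_u (leq_trans (targetD_le u EV) (V_cons u)).
(* [V] has an unused transition leaving [u], where [E] is short of consumption. *)
rewrite !ffunE => /sum_ltn_exists [x /eqP xu lt_x].
pose E' := addv E (unitD x).
have E'V : leD E' V.
  by move=> t; rewrite !ffunE; case: eqP => [->|_]; rewrite ?addn1 ?addn0.
have E_E' t : 0 < E t -> 0 < E' t by rewrite ffunE => Et; rewrite ltn_addr.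
have size_lt' : sizeD V - sizeD E' < n.
  by move: size_lt (sizeD_le E'V); rewrite sizeD_add sizeD_unit; lia.
have E'_prod s : sourceD E' s <= targetD E' s.
  rewrite sourceD_add targetD_add sourceD_unit.
  case: eqP => [<-|_]; last by rewrite addn0 (leq_trans (E_prod s)) ?leq_addr.
  by rewrite xu addn1 (leq_trans lt_u) ?leq_addr.
have E'_conn : connected_from E' r.
  move=> w; rewrite inE sourceD_add sourceD_unit.
  have [-> | Ew _] := posnP (sourceD E w); last first.
    by apply: reachable_le E_E' _; apply: E_conn; rewrite inE.
  rewrite add0n lt0b xu => /eqP <-.
  by apply: reachable_le E_E' _; apply: reachable_targetD E_conn (leq_ltn_trans _ lt_u).
have [F [E'F FV F_bal F_conn]] := IHn E' size_lt' E'V E'_prod E'_conn.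
by exists F; split=> //; apply: leD_trans E'F; apply: leD_addl.
Qed.

Definition cycle_free V := forall F, leD F V -> balanced F -> F = zero.

Lemma cycle_free_unproduced V (P : st G -> nat) :
  (forall s, sourceD V s = targetD V s + P s) -> cycle_free V -> V != zero ->
  exists2 q, 0 < sourceD V q & targetD V q = 0.
Proof.
move=> V_eq V_free V_neq0; apply: NNPP => no_q.
have V_produced q : 0 < sourceD V q -> 0 < targetD V q.
  by move=> Vq; rewrite lt0n; apply/eqP => Vq0; apply: no_q; exists q.
have [E [r [EV E_neq0 E_prod _ E_conn]]] := produced_loop V_neq0 V_produced.
have V_cons s : targetD V s <= sourceD V s by rewrite V_eq leq_addr.
have [F [EF FV F_bal _]] := balanced_extension V_cons EV E_prod E_conn.
by move: (leD_neq0 EF E_neq0); rewrite (V_free F FV F_bal) eqxx.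
Qed.

Definition atD V q : flow := [ffun t => if src t == q then V t else 0].
Definition offD V q : flow := [ffun t => if src t == q then 0 else V t].

Lemma split_state V q : V = addv (offD V q) (atD V q).
Proof. by apply/ffunP => t; rewrite !ffunE; case: ifP; rewrite ?addn0. Qed.

Lemma sizeD_atD V q : sizeD (atD V q) = sourceD V q.
Proof. by rewrite /sizeD ffunE [RHS]big_mkcond; apply: eq_bigr => t _; rewrite ffunE. Qed.

Lemma sourceD_offD V q s : sourceD (offD V q) s = if s == q then 0 else sourceD V s.
Proof.
rewrite !ffunE; case: eqP => [-> | s_q]; first by rewrite big1 // => t /eqP tq; rewrite ffunE tq eqxx.
by apply: eq_bigr => t /eqP ts; rewrite ffunE ts; case: eqP.
Qed.

Lemma leD_offD V q : leD (offD V q) V.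
Proof. by rewrite {2}(split_state V q); apply: leD_addl. Qed.

Lemma sizeD_cycle_free k V (P : st G -> nat) :
  #|suppD V| <= k -> (forall s, sourceD V s = targetD V s + P s) -> cycle_free V ->
  sizeD V <= 4 ^ k * \sum_s P s.
Proof.
elim: k V P => [|k IHk] V P supp_le V_eq V_free;
  (have [-> | V_neq0] := eqVneq V zero; first by rewrite sizeD0);
  have [q Vq Vq0] := cycle_free_unproduced V_eq V_free V_neq0.
  by move: supp_le; rewrite leqn0 cards_eq0 => /eqP supp0; move: (in_set0 q); rewrite -supp0 inE Vq.
pose P' s := if s == q then 0 else P s + targetD (atD V q) s.
have V'_eq s : sourceD (offD V q) s = targetD (offD V q) s + P' s.
  rewrite sourceD_offD /P'; case: eqP => [-> | _].
    by have := targetD_le q (leD_offD V q); rewrite Vq0 leqn0 => /eqP ->.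
  by rewrite V_eq {1}(split_state V q) targetD_add addnAC addnA.
have V'_free : cycle_free (offD V q).
  by move=> F FV'; apply: V_free; apply: leD_trans FV' (leD_offD V q).
have supp_V' : #|suppD (offD V q)| <= k.
  suff /proper_card : suppD (offD V q) \proper suppD V by move: supp_le; lia.
  apply/properP; split; last by exists q; rewrite !inE ?sourceD_offD ?eqxx.
  by apply/subsetP => s; rewrite !inE => /leq_trans; apply; apply: sourceD_le (leD_offD V q).
have Pq : sourceD V q = P q by rewrite V_eq Vq0.
have P_q : P q <= \sum_s P s by rewrite (bigD1 q) //= leq_addr.
have sum_P' : \sum_s P' s <= 3 * \sum_s P s.
  have : \sum_s P' s <= \sum_s P s + \sum_s targetD (atD V q) s.
    by rewrite -big_split; apply: leq_sum => s _; rewrite /P'; case: eqP.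
  by have := sum_targetD (atD V q); rewrite sizeD_atD Pq; lia.
rewrite (split_state V q) sizeD_add sizeD_atD Pq expnS.
have := IHk _ _ supp_V' V'_eq V'_free.
have : 0 < 4 ^ k by rewrite expn_gt0.
nia.
Qed.

Definition minimal_balanced C :=
  [/\ C != zero, balanced C & forall F, leD F C -> balanced F -> F = zero \/ F = C].

Lemma sizeD_minimal_balanced C :
  minimal_balanced C -> sizeD C <= #|st G| + 4 ^ #|st G| * (2 * #|st G|).
Proof.
move=> [C_neq0 C_bal C_min].
have C_prod q : 0 < sourceD C q -> 0 < targetD C q by rewrite C_bal.
have [E [_ [EC E_neq0 E_prod E_size _]]] := produced_loop C_neq0 C_prod.
have C_split := subDK EC; set W := subD C E in C_split.
have W_eq s : sourceD W s = targetD W s + (targetD E s - sourceD E s).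
  by move: (C_bal s) (E_prod s); rewrite C_split sourceD_add targetD_add; lia.
have W_free : cycle_free W.
  move=> F FW F_bal; have [// | FC] := C_min F (leD_trans FW (leD_sub C E)) F_bal.
  by move: (sizeD_le FW) (sizeD_gt0 E_neq0); rewrite FC {1}C_split sizeD_add; lia.
have sum_deficit : \sum_s (targetD E s - sourceD E s) <= 2 * #|st G|.
  apply: leq_trans (leq_trans (sum_targetD E) _); last by rewrite leq_mul2l E_size orbT.
  by apply: leq_sum => s _; apply: leq_subr.
rewrite C_split sizeD_add leq_add //.
apply: leq_trans (sizeD_cycle_free (max_card _) W_eq W_free) _.
by rewrite leq_mul2l sum_deficit orbT.
Qed.

Lemma cycle_balanced C : is_cycle C -> balanced C.
Proof. by case=> r [_ C_eq] s; rewrite C_eq. Qed.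

Lemma balanced_cycle_sub E :
  E != zero -> balanced E -> exists C, [/\ leD C E, C != zero & is_cycle C].
Proof.
move=> E_neq0 E_bal.
have E_prod q : 0 < sourceD E q -> 0 < targetD E q by rewrite E_bal.
have [L [r [LE L_neq0 L_prod _ L_conn]]] := produced_loop E_neq0 E_prod.
have E_cons s : targetD E s <= sourceD E s by rewrite E_bal.
have [C [LC CE C_bal C_conn]] := balanced_extension E_cons LE L_prod L_conn.
exists C; split=> //; first exact: leD_neq0 LC L_neq0.
by exists r; split=> //; apply/ffunP => s; apply: C_bal.
Qed.

Lemma minimal_balanced_cycle C : minimal_balanced C -> is_cycle C.
Proof.
move=> [C_neq0 C_bal C_min].
have [C' [C'C C'_neq0 C'_cycle]] := balanced_cycle_sub C_neq0 C_bal.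
have [C'0 | <- //] := C_min C' C'C (cycle_balanced C'_cycle).
by rewrite C'0 eqxx in C'_neq0.
Qed.

Lemma balanced_cycle_decomposition E : E != zero -> balanced E ->
  exists l, [/\ 0 < size l, forall C, C \in l -> is_cycle C /\ C != zero & sumD l = E].
Proof.
move: {2}(sizeD E).+1 (ltnSn (sizeD E)) => n.
elim: n E => [//|n IHn] E size_lt E_neq0 E_bal.
have [C [CE C_neq0 C_cycle]] := balanced_cycle_sub E_neq0 E_bal.
have E_split := subDK CE; set W := subD E C in E_split.
have [W0 | W_neq0] := eqVneq W zero.
  exists [:: C]; split=> //; first by move=> C'; rewrite inE => /eqP ->.
  by rewrite /sumD /= addD0 E_split W0 addD0.
have W_bal : balanced W by apply: balanced_sub (cycle_balanced C_cycle) CE.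
have W_lt : sizeD W < n by move: size_lt (sizeD_gt0 C_neq0); rewrite E_split sizeD_add; lia.
have [l [_ l_cycles l_sum]] := IHn W W_lt W_neq0 W_bal.
exists (C :: l); split=> //; last by rewrite /sumD /= -/(sumD _) l_sum -E_split.
by move=> C'; rewrite inE => /predU1P [-> | /l_cycles].
Qed.

Lemma simple_cycle_minimal D : simple_cycle D -> minimal_balanced D.
Proof.
move=> [D_cycle D_neq0 D_simple]; have D_bal := cycle_balanced D_cycle.
split=> // F FD F_bal; have [-> | F_neq0] := eqVneq F zero; first by left.
have D_split := subDK FD; set W := subD D F in D_split.
have [W0 | W_neq0] := eqVneq W zero; first by right; rewrite D_split W0 addD0.
have [l1 [l1_gt0 l1_cycles l1_sum]] := balanced_cycle_decomposition F_neq0 F_bal.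
have [l2 [l2_gt0 l2_cycles l2_sum]] :=
  balanced_cycle_decomposition W_neq0 (balanced_sub D_bal F_bal FD).
case: D_simple; exists (l1 ++ l2); split.
- by rewrite size_cat; apply: leq_add l1_gt0 l2_gt0.
- by move=> C; rewrite mem_cat => /orP [/l1_cycles | /l2_cycles].
- by rewrite sumD_cat l1_sum l2_sum -D_split.
Qed.

Lemma minimal_balanced_sub F :
  F != zero -> balanced F -> exists2 E, leD E F & minimal_balanced E.
Proof.
move: {2}(sizeD F).+1 (ltnSn (sizeD F)) => n.
elim: n F => [//|n IHn] F size_lt F_neq0 F_bal.
have [F_min | F_not_min] := classic (minimal_balanced F); first by exists F => // t.
have [F' [F'F F'_bal F'_neq0 F'_neqF]] :
    exists F', [/\ leD F' F, balanced F', F' != zero & F' != F].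
  apply: NNPP => no_F'; apply: F_not_min; split=> // F' F'F F'_bal.
  have [-> | F'_neq0] := eqVneq F' zero; first by left.
  have [-> | F'_neqF] := eqVneq F' F; first by right.
  by case: no_F'; exists F'.
have F'_lt : sizeD F' < n.
  rewrite -ltnS (leq_trans _ size_lt) // ltnS ltn_neqAle sizeD_le // andbT.
  by apply: contraNneq F'_neqF => F'_size; apply/eqP/(leD_sizeD_eq F'F); rewrite F'_size.
have [E EF' E_min] := IHn F' F'_lt F'_neq0 F'_bal.
by exists E => //; apply: leD_trans EF' F'F.
Qed.

Lemma cycle_free_decomposition V (P : st G -> nat) :
  (forall s, sourceD V s = targetD V s + P s) ->
  exists R l, [/\ V = addv R (sumD l), cycle_free R,
                  forall s, sourceD R s = targetD R s + P s &
                  forall C, C \in l -> minimal_balanced C].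
Proof.
move: {2}(sizeD V).+1 (ltnSn (sizeD V)) => n.
elim: n V => [//|n IHn] V size_lt V_eq.
have [V_free | V_cyclic] := classic (cycle_free V).
  by exists V, [::]; split=> //; rewrite /sumD /= addD0.
have [F [FV F_bal F_neq0]] : exists F, [/\ leD F V, balanced F & F != zero].
  apply: NNPP => no_F; apply: V_cyclic => F FV F_bal; apply/eqP; apply: NNPP => F_neq0.
  by apply: no_F; exists F; split=> //; apply/negP.
have [E EF [E_neq0 E_bal E_min]] := minimal_balanced_sub F_neq0 F_bal.
have EV := leD_trans EF FV.
have V_split := subDK EV; set W := subD V E in V_split.
have W_eq s : sourceD W s = targetD W s + P s.
  by move: (V_eq s) (E_bal s); rewrite V_split sourceD_add targetD_add; lia.
have W_lt : sizeD W < n by move: size_lt (sizeD_gt0 E_neq0); rewrite V_split sizeD_add; lia.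
have [R [l [W_split R_free R_eq l_min]]] := IHn W W_lt W_eq.
exists R, (E :: l); split=> //.
  by apply/ffunP => t; rewrite V_split W_split /sumD /= -/(sumD _) !ffunE; lia.
by move=> C; rewrite inE => /predU1P [-> | /l_min].
Qed.

Lemma connected_tree D r : connected_from D r ->
  exists T : {set trans G}, [/\ #|T| <= #|st G|, forall t, t \in T -> 0 < D t &
                                 forall u, u \in suppD D -> reachable (indD T) r u].
Proof.
move=> D_conn.
suff grow n (K : {set st G}) (T : {set trans G}) :
    #|st G| - #|K| < n -> r \in K -> #|T| <= #|K| -> (forall t, t \in T -> 0 < D t) ->
    (forall u, u \in K -> reachable (indD T) r u) ->
  exists T : {set trans G}, [/\ #|T| <= #|st G|, forall t, t \in T -> 0 < D t &
                                 forall u, u \in suppD D -> reachable (indD T) r u].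
  apply: (grow _ [set r] set0 (ltnSn _)) => [||t|u]; rewrite ?set11 ?cards0 ?inE //.
  by move/eqP ->; left.
elim: n K T => [//|n IHn] K T K_lt rK TK TD K_reach.
have [[x [w [Dx xK xw wK]]] | K_closed] :=
  classic (exists x w, [/\ 0 < D x, src x \in K, 0 < tgt x w & w \notin K]).
  have T_xT t : 0 < indD T t -> 0 < indD (x |: T) t.
    by rewrite !ffunE !lt0b => tT; rewrite setU1r.
  apply: (IHn (w |: K) (x |: T)).
  - by move: K_lt (max_card (w |: K)); rewrite cardsU1 wK; lia.
  - by rewrite setU1r.
  - by move: TK; rewrite !cardsU1 wK; case: (x \in T) => /=; lia.
  - by move=> t /setU1P [-> | /TD].
  move=> u /setU1P [-> | /K_reach]; last exact: reachable_le T_xT.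
  apply: reachable_step (reachable_le T_xT (K_reach _ xK)) _ (erefl _) xw.
  by rewrite ffunE setU11.
exists T; split=> //; first exact: leq_trans TK (max_card _).
move=> u /D_conn /(reachable_closed rK) uK; apply: K_reach; apply: uK => x w Dx xK xw.
by apply: NNPP => wK; apply: K_closed; exists x, w; split=> //; apply/negP.
Qed.

Lemma skeleton_private D D1 C (T : {set trans G}) :
  skeleton_run D -> (forall u, u \in suppD D -> reachable (indD T) (s0 G) u) ->
  D = addv D1 C -> is_cycle C -> C != zero -> exists2 x, x \in T & D1 x = 0.
Proof.
move=> [[_ D_eq] D_skel] T_reach D_split C_cycle C_neq0; apply: NNPP => no_x.
(* Then [D1] keeps the whole tree, so it is a run with the support of [D]. *)
have T_D1 t : 0 < indD T t -> 0 < D1 t.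
  by rewrite ffunE lt0b lt0n => tT; apply/eqP => D1t; apply: no_x; exists t.
have D1_eq : sourceD D1 = [ffun s => targetD D1 s + (s == s0 G)].
  apply/ffunP => s; rewrite [RHS]ffunE; move/ffunP/(_ s): D_eq; rewrite [RHS]ffunE.
  by rewrite D_split sourceD_add targetD_add (cycle_balanced C_cycle s); lia.
have D1D : leD D1 D by rewrite D_split; apply: leD_addl.
have D1_reach u : u \in suppD D -> reachable D1 (s0 G) u.
  by move=> uD; apply: reachable_le T_D1 (T_reach u uD).
have D1_supp : suppD D1 = suppD D.
  apply/setP => u; rewrite !inE; apply/idP/idP => [D1u | Du].
    exact: leq_trans D1u (sourceD_le u D1D).
  apply: reachable_sourceD (D1_reach u _); last by rewrite inE.
  by move=> s; rewrite D1_eq ffunE.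
apply: D_skel; exists D1, C; split=> //; split=> // u.
by rewrite D1_supp; apply: D1_reach.
Qed.

Lemma skeleton_run_cycles D R (l : seq flow) :
  skeleton_run D -> D = addv R (sumD l) -> (forall C, C \in l -> minimal_balanced C) ->
  size l <= #|st G|.
Proof.
move=> D_skel D_split l_min; have [[D_conn _] _] := D_skel.
have [T [T_size T_D T_reach]] := connected_tree D_conn.
pose C (i : 'I_(size l)) := nth zero l i.
have D_sum t : D t = R t + \sum_(i < size l) C i t by rewrite D_split ffunE sumD_nth.
apply: leq_trans T_size; apply: (@leq_card_private _ _ C) => i.
pose D1 : flow := [ffun t => R t + \sum_(j < size l | j != i) C j t].
have D_split_i : D = addv D1 (C i).
  by apply/ffunP => t; rewrite D_sum !ffunE (bigD1 i) //= addnA [RHS]addnAC.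
have Ci_min := l_min _ (mem_nth zero (ltn_ord i)); have [Ci_neq0 _ _] := Ci_min.
have [x xT D1x] :=
  skeleton_private D_skel T_reach D_split_i (minimal_balanced_cycle Ci_min) Ci_neq0.
exists x => // j; move: D1x (T_D x xT); rewrite D_split_i !ffunE.
case: (eqVneq j i) => [-> | ji]; first by move=> ->; rewrite add0n => ->.
by move/eqP; rewrite (bigD1 j) //= !addn_eq0 => /and3P [_ /eqP -> _].
Qed.

Lemma sizeD_skeleton_run D : skeleton_run D ->
  sizeD D <= 4 ^ #|st G| + #|st G| * (#|st G| + 4 ^ #|st G| * (2 * #|st G|)).
Proof.
move=> D_skel; have [[_ D_eq] _] := D_skel.
have D_eq' s : sourceD D s = targetD D s + (s == s0 G) by rewrite D_eq ffunE.
have [R [l [D_split R_free R_eq l_min]]] := cycle_free_decomposition D_eq'.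
have R_size : sizeD R <= 4 ^ #|st G|.
  have := sizeD_cycle_free (max_card _) R_eq R_free.
  by rewrite (bigD1 (s0 G)) //= eqxx big1 ?addn0 ?muln1 // => s /negbTE ->.
have l_size := skeleton_run_cycles D_skel D_split l_min.
rewrite D_split sizeD_add sizeD_sumD leq_add // (big_nth zero) big_mkord.
apply: leq_trans (_ : _ <= \sum_(i < size l) (#|st G| + 4 ^ #|st G| * (2 * #|st G|))) _.
  by apply: leq_sum => i _; apply/sizeD_minimal_balanced/l_min/mem_nth.
by rewrite sum_nat_const card_ord leq_mul2r l_size orbT.
Qed.

Lemma sizeD_simple_cycle_or_skeleton_run D :
  simple_cycle D \/ skeleton_run D -> sizeD D <= 4 * 4 ^ (3 * #|st G|).
Proof.
have -> : 4 ^ (3 * #|st G|) = 4 ^ #|st G| * (4 ^ #|st G| * 4 ^ #|st G|).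
  by rewrite -!expnD; congr (_ ^ _); lia.
have := @sizeD_minimal_balanced D; have := @sizeD_skeleton_run D.
have : #|st G| < 4 ^ #|st G| by apply: ltn_expl.
move: (#|st G|) (4 ^ #|st G|) => n N n_lt skel_size min_size D_small.
have B_le : n + N * (2 * n) <= 3 * (N * N) by nia.
have N_le : N <= N * N by nia.
have NN_le : N * N <= N * (N * N) by nia.
case: D_small => [/simple_cycle_minimal/min_size | /skel_size] D_size; nia.
Qed.

Lemma normv_outD D : normv (outD D) <= sizeD D.
Proof.
apply/bigmax_leqP => a _; rewrite ffunE; apply: leq_sum => t _.
have : outp t a <= 1 by apply: leq_trans (outp_small t); rewrite (bigD1 a) //= leq_addr.
by rewrite -{2}(muln1 (D t)) leq_mul2l => ->; rewrite orbT.
Qed.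

End Flows.

Theorem lemma6 :
  exists c k : nat, forall (G : grammar) (D : {ffun trans G -> nat}),
    simple_cycle D \/ skeleton_run D ->
    normv (outD D) <= c * 2 ^ (c * #|st G| ^ k).
Proof.
exists 6, 1 => G D D_small.
apply: leq_trans (normv_outD D) (leq_trans (sizeD_simple_cycle_or_skeleton_run D_small) _).
by rewrite expn1 -[4]/(2 ^ 2) -expnM mulnA leq_mul2r orbT.
Qed.
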